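(* Let $G$ be a finite group. For each conjugacy class $[H]\in\overline{P}(G)$ and each $\sigma=(\delta_\sigma,\theta_\sigma)\in\Sigma_{[H]}$ let $\bigl(b_n^{[H]_\sigma}\bigr)_{n=1}^\infty$ be a sequence of non-negative integers, such that $b_1^{[G]_{(1,1)}}\geqslant1$. Define \[ a_n^{[H]_\sigma}=\begin{cases}\theta_\sigma\, b^{[H]_\sigma}_{n/\delta_\sigma}, & \text{if }\delta_\sigma\mid n,\\ 0,&\text{otherwise},\end{cases} \qquad a_n=\sum_{[H]\in\overline{P}(G)}\sum_{\sigma\in\Sigma_{[H]}}a_n^{[H]_\sigma},\qquad b_n=\sum_{[H]\in\overline{P}(G)}\sum_{\sigma\in\Sigma_{[H]}}b_n^{[H]_\sigma}, \] for all $n\geqslant1$. Then there exist a compact metric space $X$, a homeomorphism $T:X\to X$, and a continuous action of $G$ on $X$ commuting with $T$ such that $O_n(T)=a_n$ and $O_n(T')=b_n$ for all $n\geqslant1$, where $(X',T')$ is the quotient system of $(X,T)$ under $G$.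
   Context: $\overline{P}(G)$ is the set of conjugacy classes $[H]=\{gHg^{-1}:g\in G\}$ of subgroups $H\leqslant G$. $N_G(H)=\{g\in G:gHg^{-1}=H\}$. For a finite group $K$, $\Delta(K)=\{|\langle h\rangle|:h\in K\}$. For $[H]\in\overline{P}(G)$ (with a representative $H$), $\Sigma_{[H]}=\{(\delta,\theta):\delta\in\Delta(N_G(H)/H),\ \theta=[G:H]/\delta\}$; in particular $\Sigma_{[G]}=\{(1,1)\}$. The quotient system: $X'=G\backslash X=\{\mathfrak{O}_G(x):x\in X\}$, $\mathfrak{O}_G(x)=\{g(x):g\in G\}$, with metric $d'(\mathfrak{O}_G(x),\mathfrak{O}_G(y))=\min\{d(x',y'):x'\in\mathfrak{O}_G(x),y'\in\mathfrak{O}_G(y)\}$ and $T'(\mathfrak{O}_G(x))=\mathfrak{O}_G(T(x))$. For a map $S$, $O_n(S)$ is the number of closed orbits $\{x,S(x),\dots,S^{n-1}(x)\}$ of cardinality exactly $n$. *)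

From Stdlib Require Import Reals List.
From mathcomp Require Import all_boot all_fingroup.
Set Implicit Arguments. Unset Strict Implicit. Unset Printing Implicit Defensive.

Definition is_metric (X : Type) (d : X -> X -> R) : Prop :=
  (forall x y, d x y = R0 <-> x = y) /\
  (forall x y, d x y = d y x) /\
  (forall x y z, Rle (d x z) (Rplus (d x y) (d y z))).

Definition m_open (X : Type) (d : X -> X -> R) (U : X -> Prop) : Prop :=
  forall x, U x -> exists e, Rlt R0 e /\ forall y, Rlt (d x y) e -> U y.

Definition m_compact (X : Type) (d : X -> X -> R) : Prop :=
  forall (I : Type) (U : I -> X -> Prop),
    (forall i, m_open d (U i)) -> (forall x, exists i, U i x) ->
    exists l : list I, forall x, exists i, In i l /\ U i x.

Definition m_continuous (X : Type) (d : X -> X -> R) (f : X -> X) : Prop :=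
  forall x e, Rlt R0 e -> exists del, Rlt R0 del /\
    forall y, Rlt (d x y) del -> Rlt (d (f x) (f y)) e.

Definition m_homeomorphism (X : Type) (d : X -> X -> R) (T : X -> X) : Prop :=
  exists Tinv : X -> X, cancel T Tinv /\ cancel Tinv T /\
    m_continuous d T /\ m_continuous d Tinv.

Definition commuting_action (gT : finGroupType) (X : Type) (d : X -> X -> R)
    (act : gT -> X -> X) (T : X -> X) : Prop :=
  (forall x, act 1%g x = x) /\
  (forall g h x, act (g * h)%g x = act g (act h x)) /\
  (forall g, m_continuous d (act g)) /\
  (forall g x, act g (T x) = T (act g x)).

Definition card_eq (Y : Type) (P : Y -> Prop) (k : nat) : Prop :=
  exists f : 'I_k -> Y, injective f /\ forall y, P y <-> exists i, f i = y.

Definition orbit_set (Y : Type) (S : Y -> Y) (x : Y) (n : nat) : Y -> Prop :=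
  fun y => exists k, (k < n)%N /\ y = iter k S x.

Definition closed_orbit (Y : Type) (D : Y -> Prop) (S : Y -> Y) (n : nat)
    (A : Y -> Prop) : Prop :=
  exists x, D x /\ iter n S x = x /\ A = orbit_set S x n /\ card_eq A n.

(* O_n(S) = k  (for S restricted to the invariant domain D) *)
Definition On_eq (Y : Type) (D : Y -> Prop) (S : Y -> Y) (n k : nat) : Prop :=
  card_eq (closed_orbit D S n) k.

Definition Gorbit (gT : finGroupType) (X : Type) (act : gT -> X -> X) (x : X)
  : X -> Prop := fun y => exists g : gT, y = act g x.

Definition is_Gorbit (gT : finGroupType) (X : Type) (act : gT -> X -> X)
  (A : X -> Prop) : Prop := exists x, A = Gorbit act x.

(* T' on orbits: T'(O(x)) = T(O(x)) = O(T x) *)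
Definition quotT (X : Type) (T : X -> X) (A : X -> Prop) : X -> Prop :=
  fun y => exists x, A x /\ y = T x.

(* \overline{P}(G), G = [set: gT]: conjugacy classes of subgroups *)
Definition Pbar (gT : finGroupType) : {set {set {set gT}}} :=
  [set ((gval H) :^: [set: gT])%g | H : {group gT}].

Definition rep (gT : finGroupType) (C : {set {set gT}}) : {group gT} :=
  odflt 1%G [pick H : {group gT} | (H :^: [set: gT])%g == C].

Definition Delta (gT : finGroupType) (H : {group gT}) : seq nat :=
  undup [seq #[x]%g | x <- enum ('N_([set: gT])(H) / H)%g].

Definition theta (gT : finGroupType) (H : {group gT}) (delta : nat) : nat :=
  #|[set: gT] : H|%g %/ delta.

Definition seq_a (gT : finGroupType) (b : {set {set gT}} -> nat -> nat -> nat)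
    (n : nat) : nat :=
  \sum_(C in Pbar gT) \sum_(delta <- Delta (rep C))
     (if delta %| n then theta (rep C) delta * b C delta (n %/ delta) else 0).

Definition seq_b (gT : finGroupType) (b : {set {set gT}} -> nat -> nat -> nat)
    (n : nat) : nat :=
  \sum_(C in Pbar gT) \sum_(delta <- Delta (rep C)) b C delta n.

From HB Require Import structures.
From Stdlib Require Import Rbase Rbasic_fun Rtrigo_def Lra.
From Stdlib Require Import ClassicalEpsilon FunctionalExtensionality PropExtensionality.
From Stdlib Require List.
From mathcomp Require Import all_boot all_fingroup all_solvable zify.
Set Implicit Arguments. Unset Strict Implicit. Unset Printing Implicit Defensive.

(** The system is a disjoint union of towers. A tower is given by a class [[H]]
    with representative [H], an element [u] of [N_G(H)] whose image in
    [N_G(H)/H] has order [δ], a height [m >= 1] and a copy index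
    [j < b^{[H]_δ}_m]; its points are the pairs [(A, i)] with [A] a left coset
    of [H] and [i < m]. [T] raises [i] by one and, from the top floor, returns
    to floor [0] while replacing [A] by [A u]; [G] acts on [A] from the left,
    which commutes with [T]. As [A u^c = A] iff [δ | c], every point has
    [T]-period [δ m], and the [T]-orbits of a tower correspond to the left
    cosets of [<u>H], of which there are [[G : H]/δ = θ]. The cosets on one
    floor form a single [G]-orbit, so the quotient of a tower is one
    [T']-cycle of length [m]. Summing over the towers with [δ m = n] (resp.
    [m = n]) gives [O_n(T) = a_n] and [O_n(T') = b_n].

    The countably many points form a compact metric space in which all points
    are isolated except one, the only point of the tower of [[G]] with
    [δ = m = 1] and [j = 0] (it exists because [b_1^{[G]} >= 1]), towards
    which the points of level [m + j] converge: [d(x, y) = max(w x, w y)] for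
    [x <> y], with [w = 1/(level + 1)] and [w = 0] at that fixed point. There
    are finitely many points of each level, and [T], [T^-1] and the action
    preserve levels, hence are isometries. *)

(** * Closed orbits and quotient systems *)

Lemma card_eq_image (Y : Type) (F : finType) (f : F -> Y) (P : Y -> Prop) :
  injective f -> (forall y, P y <-> exists i, f i = y) -> card_eq P #|F|.
Proof.
move=> injf Pf; exists (fun k => f (enum_val k)); split.
  by move=> k k' /injf /enum_val_inj.
move=> y; rewrite Pf; split=> [[i <-]|[k <-]]; last by exists (enum_val k).
by exists (enum_rank i); rewrite enum_rankK.
Qed.

Lemma card_eq_leq (Y : Type) (P : Y -> Prop) n t (g : nat -> Y) :
  card_eq P n -> (forall y, P y -> exists2 s, s < t & y = g s) -> n <= t.
Proof.
case=> f [injf Pf] Pg.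
have idx k : {s : 'I_t | f k = g s}.
  apply: constructive_indefinite_description.
  have [s st ->] := Pg _ (proj2 (Pf (f k)) (ex_intro _ k erefl)).
  by exists (Ordinal st).
suff /leq_card : injective (fun k => sval (idx k)) by rewrite !card_ord.
by move=> k k' E; apply: injf; rewrite (svalP (idx k)) (svalP (idx k')) E.
Qed.

Section ClosedOrbits.
Variables (Y : Type) (S : Y -> Y).

Lemma iter_mul_fixed x n q : iter n S x = x -> iter (q * n) S x = x.
Proof. by move=> Sn; elim: q => [|q IH] //; rewrite mulSn iterD IH Sn. Qed.

Lemma iter_modn_fixed x n k : iter n S x = x -> iter k S x = iter (k %% n) S x.
Proof.
by move=> Sn; rewrite {1}(divn_eq k n) addnC iterD iter_mul_fixed.
Qed.

Lemma orbit_set_iter x n t :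
  0 < n -> iter n S x = x -> orbit_set S (iter t S x) n = orbit_set S x n.
Proof.
move=> n_gt0 Sn; apply: functional_extensionality => y.
apply: propositional_extensionality; split=> -[k [kn ->]].
  exists ((k + t) %% n); split; first by rewrite ltn_mod.
  by rewrite -iterD; apply: iter_modn_fixed.
exists ((k + n.-1 * t) %% n); split; first by rewrite ltn_mod.
rewrite -iterD [RHS](iter_modn_fixed _ Sn) modnDml -addnA -mulSnr prednK //.
by rewrite -modnDmr modnMr addn0 (modn_small kn).
Qed.

Lemma card_eq_orbit_set x n :
  iter n S x = x -> (forall t, 0 < t < n -> iter t S x <> x) ->
  card_eq (orbit_set S x n) n.
Proof.
move=> Sn minn.
have lt_neq (k k' : 'I_n) : k < k' -> iter k S x <> iter k' S x.
  move=> kk'; have t_range : 0 < n - k' + k < n by have := ltn_ord k'; lia.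
  by move=> E; apply: (minn _ t_range); rewrite iterD E -iterD subnK ?Sn // ltnW.
have inj : injective (fun k : 'I_n => iter k S x).
  move=> k k' E; apply/val_inj; case: (ltngtP k k') => // [kk' | k'k].
    by case: (lt_neq _ _ kk' E).
  by case: (lt_neq _ _ k'k (esym E)).
exists (fun k : 'I_n => iter k S x); split => // y; split.
  by case=> k [kn ->]; exists (Ordinal kn).
by case=> k <-; exists k.
Qed.

Lemma card_eq_orbit_set_min x n :
  card_eq (orbit_set S x n) n -> forall t, 0 < t < n -> iter t S x <> x.
Proof.
move=> card_n t /andP[t_gt0 tn] St.
suff : n <= t by rewrite leqNgt tn.
apply: (card_eq_leq (g := fun s => iter s S x)) card_n _ => _ [k [_ ->]].
by exists (k %% t); [rewrite ltn_mod | apply: iter_modn_fixed].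
Qed.

Lemma iter_fixed_min x p :
  (forall k, iter k S x = x <-> p %| k) -> forall t, 0 < t < p -> iter t S x <> x.
Proof.
by move=> per t /andP[t_gt0 tp] /per /(dvdn_leq t_gt0); rewrite leqNgt tp.
Qed.

Lemma iter_fixed_period x n p :
  0 < n -> (forall k, iter k S x = x <-> p %| k) ->
  iter n S x = x -> (forall t, 0 < t < n -> iter t S x <> x) -> p = n.
Proof.
move=> n_gt0 per /per pn minn; have p_le_n := dvdn_leq n_gt0 pn.
case: (ltngtP p n) p_le_n => // p_lt_n _; case: p per pn p_lt_n => [|p] per.
  by rewrite dvd0n => /eqP n0; rewrite n0 in n_gt0.
by move=> _ p_lt_n; case: (minn p.+1) => //; apply/per.
Qed.

Lemma On_eq_transversal (D : Y -> Prop) n (F : finType) (phi : F -> Y) :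
  0 < n ->
  (forall i, D (phi i)) ->
  (forall i k, iter k S (phi i) = phi i <-> n %| k) ->
  (forall i i' t, iter t S (phi i) = phi i' -> i = i') ->
  (forall y, D y -> iter n S y = y -> (forall t, 0 < t < n -> iter t S y <> y) ->
     exists i t, y = iter t S (phi i)) ->
  On_eq D S n #|F|.
Proof.
move=> n_gt0 Dphi per disj cover.
apply: (@card_eq_image _ F (fun i => orbit_set S (phi i) n)).
  move=> i i' E; have : orbit_set S (phi i) n (phi i') by rewrite E; exists 0.
  by case=> t [_ Et]; apply: (disj i i' t); rewrite Et.
move=> A; split.
  case=> x [Dx [Sx [-> card_n]]].
  have [i [t ->]] := cover x Dx Sx (card_eq_orbit_set_min card_n).
  by exists i; rewrite orbit_set_iter //; apply/per.
case=> i <-; exists (phi i); split; [exact: Dphi | split; [apply/per | split]] => //.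
exact: card_eq_orbit_set (proj2 (per i n) (dvdnn n)) (iter_fixed_min (per i)).
Qed.

End ClosedOrbits.

Section QuotientSystem.
Variables (gT : finGroupType) (Y : Type) (act : gT -> Y -> Y) (S : Y -> Y).
Hypothesis act1 : forall y, act 1%g y = y.
Hypothesis actM : forall g h y, act (g * h)%g y = act g (act h y).
Hypothesis actS : forall g y, act g (S y) = S (act g y).

Lemma Gorbit_eqP y y' : Gorbit act y = Gorbit act y' <-> exists g, y' = act g y.
Proof.
split=> [Eyy' | [g ->]]; first by rewrite -/(Gorbit act y _) Eyy'; exists 1%g.
apply: functional_extensionality => z; apply: propositional_extensionality.
split=> -[h ->]; last by exists (h * g)%g; rewrite actM.
by exists (h * g^-1)%g; rewrite -actM -mulgA mulVg mulg1.
Qed.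

Lemma quotT_Gorbit y : quotT S (Gorbit act y) = Gorbit act (S y).
Proof.
apply: functional_extensionality => z; apply: propositional_extensionality.
split=> [[_ [[g ->] ->]] | [g ->]]; first by exists g; rewrite actS.
by exists (act g y); split; [exists g | rewrite actS].
Qed.

Lemma iter_quotT k y : iter k (quotT S) (Gorbit act y) = Gorbit act (iter k S y).
Proof. by elim: k => //= k ->; rewrite quotT_Gorbit. Qed.

End QuotientSystem.

(** * A compact metric with a single accumulation point *)

Lemma mem_In (T : eqType) (x : T) (s : seq T) : x \in s -> List.In x s.
Proof. by elim: s => //= y s IH; rewrite inE => /predU1P[->|/IH]; [left | right]. Qed.

Section LevelMetric.
Variables (X : eqType) (x0 : X) (level : X -> nat).
Local Open Scope R_scope.

Definition level_weight (x : X) : R := if x == x0 then 0 else / INR (level x).+1.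

Definition level_dist (x y : X) : R :=
  if x == y then 0 else Rmax (level_weight x) (level_weight y).

Lemma level_weight_gt0 x : x != x0 -> 0 < level_weight x.
Proof. by rewrite /level_weight => /negbTE ->; apply/Rinv_0_lt_compat/lt_0_INR/ltP. Qed.

Lemma level_weight_ge0 x : 0 <= level_weight x.
Proof.
have [->|/level_weight_gt0] := eqVneq x x0; last lra.
by rewrite /level_weight eqxx; lra.
Qed.

Lemma level_dist_x0 x : level_dist x0 x = level_weight x.
Proof.
rewrite /level_dist; have [<-|_] := eqVneq x0 x; first by rewrite /level_weight eqxx.
by rewrite {1}/level_weight eqxx Rmax_right //; apply: level_weight_ge0.
Qed.

Lemma level_dist_ge0 x y : 0 <= level_dist x y.
Proof.
rewrite /level_dist; case: eqP => _; first lra.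
exact: Rle_trans (level_weight_ge0 x) (Rmax_l _ _).
Qed.

Lemma level_dist_metric : is_metric level_dist.
Proof.
split; [|split].
- move=> x y; split=> [|->]; last by rewrite /level_dist eqxx.
  rewrite /level_dist; have [//|xy] := eqVneq x y.
  have := Rmax_l (level_weight x) (level_weight y).
  have := Rmax_r (level_weight x) (level_weight y).
  have [ex|/level_weight_gt0] := eqVneq x x0; last lra.
  have /level_weight_gt0 : y != x0 by rewrite -ex eq_sym.
  lra.
- by move=> x y; rewrite /level_dist eq_sym Rmax_comm.
- move=> x y z; have := level_dist_ge0 x y; have := level_dist_ge0 y z.
  rewrite /level_dist; have [_|xz] := eqVneq x z; first lra.
  have [<-|xy] := eqVneq x y; first by rewrite (negbTE xz); lra.
  have [<-|yz] := eqVneq y z; first lra.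
  have := Rmax_l (level_weight x) (level_weight y).
  have := Rmax_r (level_weight y) (level_weight z).
  by move=> *; apply: Rmax_lub; lra.
Qed.

Lemma level_dist_continuous (f : X -> X) :
  injective f -> f x0 = x0 -> (forall x, level (f x) = level x) ->
  m_continuous level_dist f.
Proof.
move=> finj fx0 flevel.
have fw x : level_weight (f x) = level_weight x.
  by rewrite /level_weight -{1}fx0 (inj_eq finj) flevel.
move=> x e e_gt0; exists e; split => // y.
by rewrite /level_dist (inj_eq finj) !fw.
Qed.

Lemma level_dist_homeomorphism (f g : X -> X) :
  cancel f g -> cancel g f -> f x0 = x0 -> (forall x, level (f x) = level x) ->
  m_homeomorphism level_dist f.
Proof.
move=> fK gK fx0 flevel; exists g; do 2!split => //.
split; apply: level_dist_continuous => //; first exact: can_inj fK.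
- exact: can_inj gK.
- by rewrite -{1}fx0 fK.
- by move=> x; rewrite -{2}(gK x) flevel.
Qed.

Hypothesis level_finite : forall N, exists L : seq X, forall x, (level x < N)%N -> x \in L.

Lemma level_dist_compact : m_compact level_dist.
Proof.
move=> I U Uopen Ucover.
have [i0 Ux0] := Ucover x0.
have [e [e_gt0 ball_x0]] := Uopen i0 x0 Ux0.
have [N [Ne N_gt0]] := archimed_cor1 e e_gt0.
have [L leveL] := level_finite N.
have pick x : {i | U i x} by apply: constructive_indefinite_description.
exists (i0 :: List.map (fun x => sval (pick x)) L) => x.
have [near|far] := Rlt_le_dec (level_dist x0 x) e.
  by exists i0; split; [left | apply: ball_x0].
exists (sval (pick x)); split; last exact: svalP (pick x).
right; apply: List.in_map; apply: mem_In; apply: leveL.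
move: far; rewrite level_dist_x0 /level_weight; case: eqP => [_|_ far]; first lra.
have : INR (level x).+1 < INR N.
  case: (Rlt_le_dec (INR (level x).+1) (INR N)) => // h.
  by have := Rinv_le_contravar _ _ (lt_0_INR _ N_gt0) h; lra.
by move/INR_lt/ltP/ltnW.
Qed.

End LevelMetric.

(** * Cosets of a subgroup and a normalizing element *)

Section LeftCosets.
Variables (gT : finGroupType) (H : {group gT}).
Local Open Scope group_scope.
Local Notation cosets := (lcosets H [set: gT]).

Lemma lcosets_mull g A : A \in cosets -> g *: A \in cosets.
Proof. by case/lcosetsP=> a _ ->; apply/lcosetsP; exists (g * a); rewrite ?inE ?lcosetM. Qed.

Lemma lcoset_mulr_norm r x : x \in 'N(H) -> (r *: H) :* x = (r * x) *: H.
Proof. by move=> xN; rewrite lcosetM -mulgA norm_rlcoset. Qed.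

Lemma lcosets_mulr A x : x \in 'N(H) -> A \in cosets -> A :* x \in cosets.
Proof.
move=> xN /lcosetsP[a _ ->]; apply/lcosetsP; exists (a * x); rewrite ?inE //.
exact: lcoset_mulr_norm.
Qed.

Lemma mem_repr_lcosets A : A \in cosets -> repr A \in A.
Proof. by case/lcosetsP=> a _ ->; apply: mem_repr (lcoset_refl H a). Qed.

Lemma lcosets_reprE A : A \in cosets -> A = repr A *: H.
Proof.
move=> AH; have := mem_repr_lcosets AH.
by case/lcosetsP: AH => a _ -> /lcoset_eqP.
Qed.

Lemma lcosets_rcoset_eq A x : A \in cosets -> (A :* x == A) = (x \in H).
Proof.
case/lcosetsP=> a _ ->; rewrite -mulgA; apply/eqP/idP => [/lcoset_inj Hx | xH].
  by rewrite -Hx rcoset_refl.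
by rewrite rcoset_id.
Qed.

Lemma lcosets_transitive A A' : A \in cosets -> A' \in cosets -> exists g, A' = g *: A.
Proof.
case/lcosetsP=> a _ -> /lcosetsP[a' _ ->].
by exists (a' * a^-1); rewrite -lcosetM mulgKV.
Qed.

Section NormalizingElement.
Variables (u : gT).
Hypothesis uN : u \in 'N(H).
Local Notation d := #[coset H u].
Local Notation K := (<[u]> <*> H)%G.

Lemma joing_cycle_norm : K :=: <[u]> * H.
Proof. by rewrite /= norm_joinEl // cycle_subG. Qed.

Lemma expg_norm_in c : (u ^+ c \in H) = (d %| c).
Proof.
rewrite order_dvdn -morphX //; apply/idP/eqP => [|Hc]; first exact: coset_id.
by apply: coset_idr; rewrite ?groupX.
Qed.

Lemma card_joing_cycle : #|K| = (#|H| * d)%N.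
Proof.
have nHK : K \subset 'N(H) by rewrite join_subG cycle_subG uN normG.
rewrite -(Lagrange (joing_subr _ _)) -card_quotient // joing_cycle_norm.
by rewrite quotientMidr quotient_cycle // -orderE.
Qed.

Lemma mem_lcoset_joing_cycle r r' :
  reflect (exists s, r' *: H = (r *: H) :* u ^+ s) (r' \in r *: K).
Proof.
rewrite mem_lcoset joing_cycle_norm.
apply: (iffP mulsgP) => [[v h /cycleP[s ->] hH Er] | [s Er]].
  exists s; rewrite lcoset_mulr_norm ?groupX //.
  by rewrite -(mulKVg r r') Er mulgA lcosetM (lcoset_id hH).
rewrite lcoset_mulr_norm ?groupX // in Er.
have : r' \in (r * u ^+ s) *: H by rewrite -Er lcoset_refl.
case/lcosetP=> h hH ->; exists (u ^+ s) h; rewrite ?mem_cycle //.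
by rewrite -mulgA mulKg.
Qed.

End NormalizingElement.

End LeftCosets.

Section DeltaElement.
Variables (gT : finGroupType) (H : {group gT}).
Local Open Scope group_scope.

Lemma Delta_gt0 d : d \in Delta H -> 0 < d.
Proof. by rewrite mem_undup => /mapP[x _ ->]; apply: order_gt0. Qed.

Lemma Delta_leq_card d : d \in Delta H -> d <= #|gT|.
Proof.
rewrite mem_undup => /mapP[x]; rewrite mem_enum => Nx ->.
apply: leq_trans (dvdn_leq (cardG_gt0 _) (order_dvdG Nx)) _.
exact: leq_trans (leq_quotient _ _) (max_card _).
Qed.

Lemma Delta1 : 1%N \in Delta H.
Proof. by rewrite mem_undup; apply/mapP; exists 1; rewrite ?mem_enum ?order1. Qed.

Definition delta_elt d : gT :=
  repr (odflt 1 [pick x in 'N_([set: gT])(H) / H | #[x] == d]).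

Lemma delta_elt_norm d : delta_elt d \in 'N(H).
Proof. exact: repr_coset_norm. Qed.

Lemma order_coset_delta_elt d : d \in Delta H -> #[coset H (delta_elt d)] = d.
Proof.
rewrite mem_undup => /mapP[x]; rewrite mem_enum => Nx ->.
rewrite coset_reprK; case: pickP => [y /andP[_ /eqP] // | /(_ x)].
by rewrite Nx eqxx.
Qed.

Definition delta_join d : {group gT} := (<[delta_elt d]> <*> H)%G.

Lemma card_lcosets_delta_join d :
  d \in Delta H -> #|lcosets (delta_join d) [set: gT]| = theta H d.
Proof.
move=> dH; rewrite card_lcosets /theta -!divgS ?subsetT //.
by rewrite card_joing_cycle ?delta_elt_norm // order_coset_delta_elt // divnMA.
Qed.

End DeltaElement.

(** * The tower model *)

Lemma sum_ord_lt N k c : k <= N -> \sum_(j < N) (if j < k then c else 0) = k * c.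
Proof. by move=> kN; rewrite -big_mkcond /= -big_ord_widen // sum_nat_const card_ord. Qed.

Lemma sum_ord_mem N (s : seq nat) (F : nat -> nat) :
  uniq s -> {subset s <= gtn N} ->
  \sum_(d < N) (if val d \in s then F d else 0) = \sum_(d <- s) F d.
Proof.
move=> s_uniq sN; rewrite -big_mkcond /= -(big_mkord (mem s)) -big_filter.
apply/perm_big/uniq_perm; rewrite ?filter_uniq ?iota_uniq // => d.
by rewrite mem_filter mem_iota subn0 /=; case: (boolP (d \in s)) => //= /sN.
Qed.

Lemma sum_pair (I J : finType) (G : I * J -> nat) :
  \sum_(q : I * J) G q = \sum_(i : I) \sum_(j : J) G (i, j).
Proof. by rewrite pair_bigA; apply: eq_bigr => -[]. Qed.

Section Cells.
Variables (gT : finGroupType) (F : finType).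
Variables (P : {set {set gT}} -> nat -> bool) (f : {set {set gT}} -> nat -> nat).
Variable B : {set {set gT}} -> nat -> {set F}.

Definition cell_bound := \max_(C : {set {set gT}}) \max_(d < #|gT|.+1) f C d.

Lemma leq_cell_bound C d : d \in Delta (rep C) -> f C d <= cell_bound.
Proof.
move/Delta_leq_card; rewrite -ltnS => dG; apply: leq_trans (leq_bigmax C).
exact: leq_bigmax_cond (Ordinal dG) isT.
Qed.

(* A representative is indexed by [(C, d, j, y)]: copy [j] of the tower [(C, d)]
   and a label [y] in [B C d]; the ordinal bounds only make the index type finite. *)
Definition cell := ({set {set gT}} * 'I_#|gT|.+1 * 'I_cell_bound * F)%type.

Definition in_cell (q : cell) : bool :=
  let: (C, d, j, y) := q in
  [&& C \in Pbar gT, val d \in Delta (rep C), P C d, val j < f C d & y \in B C d].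

Lemma card_cells :
  #|[pred q | in_cell q]| =
  \sum_(C in Pbar gT) \sum_(d <- Delta (rep C)) (if P C d then f C d * #|B C d| else 0).
Proof.
rewrite -sum1_card big_mkcond /= !sum_pair [RHS]big_mkcond /=.
apply: eq_bigr => C _; case: (boolP (C \in Pbar gT)) => CP; last first.
  by do 3!(apply: big1 => ? _); rewrite inE /= (negbTE CP).
have Delta_lt d : d \in Delta (rep C) -> d < #|gT|.+1 by rewrite ltnS; apply: Delta_leq_card.
rewrite -(sum_ord_mem _ (undup_uniq _) Delta_lt); apply: eq_bigr => d _.
case: (boolP (val d \in Delta (rep C))) => dD; last first.
  by do 2!(apply: big1 => ? _); rewrite inE /= CP (negbTE dD).
case: (boolP (P C d)) => Pd; last first.
  by do 2!(apply: big1 => ? _); rewrite inE /= CP dD (negbTE Pd).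
rewrite -(sum_ord_lt _ (leq_cell_bound dD)); apply: eq_bigr => j _.
case: ltnP => jf; last by apply: big1 => ? _; rewrite inE /= CP dD Pd ltnNge jf.
by rewrite -sum1_card [RHS]big_mkcond; apply: eq_bigr => y _; rewrite inE /= CP dD Pd jf.
Qed.

End Cells.

Lemma modn_addr_eq i k m : i < m -> ((i + k) %% m == i) = (m %| k).
Proof. by move=> im; rewrite -{2}(modn_small im) -{2}(addn0 i) eqn_modDl mod0n. Qed.

(* The point [(A, i)] of copy [j] of the tower over the class [C] with [δ = d]
   and height [m]. *)
Record point (gT : finGroupType) := Point {
  pclass : {set {set gT}}; pdelta : nat; plen : nat; pcopy : nat;
  pcoset : {set gT}; ppos : nat }.

Definition point_tuple (gT : finGroupType) (p : point gT) :=
  (pclass p, pdelta p, plen p, pcopy p, pcoset p, ppos p).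
Definition tuple_point (gT : finGroupType)
    (t : {set {set gT}} * nat * nat * nat * {set gT} * nat) :=
  let: (C, d, m, j, A, i) := t in Point C d m j A i.
Lemma point_tupleK (gT : finGroupType) : cancel (@point_tuple gT) (@tuple_point gT).
Proof. by case. Qed.
HB.instance Definition _ (gT : finGroupType) :=
  Equality.copy (point gT) (can_type (@point_tupleK gT)).

Section Tower.
Variable gT : finGroupType.
Local Open Scope group_scope.
Local Notation point := (point gT).

Definition tower_elt C d : gT := delta_elt (rep C) d.

Definition step (p : point) : point :=
  let: Point C d m j A i := p in
  if i.+1 < m then Point C d m j A i.+1 else Point C d m j (A :* tower_elt C d) 0.

Definition step_inv (p : point) : point :=
  let: Point C d m j A i := p in
  if 0 < i then Point C d m j A i.-1 else Point C d m j (A :* (tower_elt C d)^-1) m.-1.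

Definition act_point (g : gT) (p : point) : point :=
  let: Point C d m j A i := p in Point C d m j (g *: A) i.

Definition shape (p : point) : point :=
  let: Point C d m j _ i := p in Point C d m j set0 i.

Definition level (p : point) : nat := (plen p + pcopy p)%N.

Lemma shape_act_point g p : shape (act_point g p) = shape p.
Proof. by case: p. Qed.

Lemma act_point_step g p : act_point g (step p) = step (act_point g p).
Proof. by case: p => C d m j A i /=; case: ifP; rewrite //= mulgA. Qed.

Lemma level_step p : level (step p) = level p.
Proof. by case: p => C d m j A i /=; case: ifP. Qed.

Lemma level_act_point g p : level (act_point g p) = level p.
Proof. by case: p. Qed.

Lemma iter_step C d m j A i k : i < m ->
  iter k step (Point C d m j A i) =
  Point C d m j (A :* tower_elt C d ^+ ((i + k) %/ m)) ((i + k) %% m).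
Proof.
move=> im; have m_gt0 : 0 < m by apply: leq_ltn_trans im.
elim: k => [|k IH]; first by rewrite addn0 divn_small // modn_small // expg0 rcoset1.
rewrite iterS IH /= addnS.
have Es : (i + k).+1 = (i + k) %/ m * m + ((i + k) %% m).+1 by rewrite addnS -divn_eq.
case: ltnP => [lt_m | ge_m].
  by rewrite Es divnMDl // modnMDl (divn_small lt_m) addn0 (modn_small lt_m).
have {ge_m} eq_m : ((i + k) %% m).+1 = m by apply/eqP; rewrite eqn_leq ge_m ltn_pmod.
by rewrite Es eq_m -mulSnr mulnK // modnMl expgSr rcosetM.
Qed.

Lemma step_invK p : ppos p < plen p -> step_inv (step p) = p.
Proof.
case: p => C d m j A i /= im; case: ifP => [//|/negbT]; rewrite -leqNgt => ge_m /=.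
have -> : m = i.+1 by apply/eqP; rewrite eqn_leq ge_m im.
by rewrite -rcosetM mulgV rcoset1.
Qed.

Lemma stepK p : ppos p < plen p -> step (step_inv p) = p.
Proof.
case: p => C d m j A i /= im; case: (posnP i) im => [-> | i_gt0] im /=.
  by rewrite prednK // ltnn -rcosetM mulVg rcoset1.
by rewrite prednK // im.
Qed.

Definition valid_point (b : {set {set gT}} -> nat -> nat -> nat) (p : point) : bool :=
  let: Point C d m j A i := p in
  [&& C \in Pbar gT, d \in Delta (rep C), j < b C d m,
      A \in lcosets (rep C) [set: gT] & i < m].

Lemma valid_step b p : valid_point b p -> valid_point b (step p).
Proof.
case: p => C d m j A i /and5P[CP dD jb AH im] /=.
case: ifP => [im' | _]; rewrite /= CP dD jb ?AH ?im' //=.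
by rewrite lcosets_mulr ?delta_elt_norm ?(leq_ltn_trans _ im).
Qed.

Lemma valid_step_inv b p : valid_point b p -> valid_point b (step_inv p).
Proof.
case: p => C d m j A i /and5P[CP dD jb AH im] /=.
case: posnP => [_ | i_gt0]; rewrite /= CP dD jb ?AH //=.
  by rewrite lcosets_mulr ?groupV ?delta_elt_norm //= prednK ?ltnn // (leq_ltn_trans _ im).
by rewrite (leq_ltn_trans (leq_pred i) im).
Qed.

Lemma valid_act_point b g p : valid_point b p -> valid_point b (act_point g p).
Proof.
by case: p => C d m j A i /and5P[CP dD jb AH im]; rewrite /= CP dD jb im lcosets_mull.
Qed.

Lemma iter_step_fixed b p k :
  valid_point b p -> iter k step p = p <-> pdelta p * plen p %| k.
Proof.
case: p => C d m j A i /and5P[_ dD _ AH im] /=; rewrite iter_step //.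
have m_gt0 : 0 < m by apply: leq_ltn_trans im.
have coset_fixed c : (A :* tower_elt C d ^+ c == A) = (d %| c).
  rewrite (lcosets_rcoset_eq _ AH) (expg_norm_in (delta_elt_norm _ _)).
  by rewrite order_coset_delta_elt.
case: (boolP (m %| k)) => [/divnK km | mk]; last first.
  have /negP dmk : ~~ (d * m %| k) by apply: contra mk; apply: dvdn_trans (dvdn_mull d _).
  by split=> [[_ /eqP] | /dmk //]; rewrite modn_addr_eq // (negbTE mk).
rewrite -km dvdn_pmul2r //; move: (k %/ m) => c.
rewrite addnC divnMDl // modnMDl (divn_small im) (modn_small im) addn0 -coset_fixed.
by split=> [[->] | /eqP ->].
Qed.

Lemma shape_eq_act_point b p p' :
  valid_point b p -> valid_point b p' -> shape p = shape p' -> exists g, p' = act_point g p.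
Proof.
case: p p' => C d m j A i [C' d' m' j' A' i'] /and5P[_ _ _ AH _] /and5P[_ _ _ A'H _].
by case=> *; subst; have [g ->] := lcosets_transitive AH A'H; exists g.
Qed.

End Tower.

Lemma rep_classT (gT : finGroupType) :
  rep ([set: gT] :^: [set: gT])%g = [set: gT] :> {set gT}.
Proof.
rewrite /rep; case: pickP => [K /eqP KT | /(_ [set: gT]%G)]; last by rewrite eqxx.
have : gval K \in ([set: gT] :^: [set: gT])%g by rewrite -KT orbit_refl.
by case/imsetP => x _ ->; rewrite conjTg.
Qed.

Section Space.
Variables (gT : finGroupType) (b : {set {set gT}} -> nat -> nat -> nat).
Hypothesis hb : (1 <= b ([set: gT] :^: [set: gT])%g 1%N 1%N)%N.
Local Open Scope group_scope.

Definition space := {p : point gT | valid_point b p}.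

Definition shift (x : space) : space := exist _ (step (val x)) (valid_step (valP x)).
Definition shift_inv (x : space) : space :=
  exist _ (step_inv (val x)) (valid_step_inv (valP x)).
Definition gact (g : gT) (x : space) : space :=
  exist _ (act_point g (val x)) (valid_act_point g (valP x)).
Definition space_level (x : space) : nat := level (val x).

Lemma ppos_lt_plen (x : space) : ppos (val x) < plen (val x).
Proof. by case: x => -[C d m j A i] /= /and5P[]. Qed.

Lemma shiftK : cancel shift shift_inv.
Proof. by move=> x; apply: val_inj; rewrite /= step_invK ?ppos_lt_plen. Qed.

Lemma shift_invK : cancel shift_inv shift.
Proof. by move=> x; apply: val_inj; rewrite /= stepK ?ppos_lt_plen. Qed.

Lemma space_level_shift x : space_level (shift x) = space_level x.
Proof. exact: level_step. Qed.

Lemma space_level_gact g x : space_level (gact g x) = space_level x.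
Proof. exact: level_act_point. Qed.

Lemma gact1 x : gact 1 x = x.
Proof. by apply: val_inj; case: x => -[C d m j A i] /=; rewrite lcoset1. Qed.

Lemma gactM g h x : gact (g * h) x = gact g (gact h x).
Proof. by apply: val_inj; case: x => -[C d m j A i] /=; rewrite lcosetM. Qed.

Lemma gactK g : cancel (gact g) (gact g^-1).
Proof. by move=> x; rewrite -gactM mulVg gact1. Qed.

Lemma gact_shift g x : gact g (shift x) = shift (gact g x).
Proof. by apply: val_inj; rewrite /= act_point_step. Qed.

Definition apex_point : point gT := Point ([set: gT] :^: [set: gT]) 1 1 0 [set: gT] 0.

Lemma valid_apex_point : valid_point b apex_point.
Proof.
apply/and5P; split=> //; first by apply/imsetP; exists [set: gT]%G.
  exact: Delta1.
by rewrite rep_classT; apply/lcosetsP; exists 1; rewrite ?inE ?lcoset1.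
Qed.

Definition apex : space := exist _ apex_point valid_apex_point.

Lemma shift_apex : shift apex = apex.
Proof. by apply: val_inj; rewrite /= (rcoset_id (G := [set: gT]%G)) ?inE. Qed.

Lemma gact_apex g : gact g apex = apex.
Proof. by apply: val_inj; rewrite /= (lcoset_id (G := [set: gT]%G)) ?inE. Qed.

Lemma space_level_finite N :
  exists L : seq space, forall x, space_level x < N -> x \in L.
Proof.
pose F : finType := ({set {set gT}} * 'I_#|gT|.+1 * 'I_N * 'I_N * {set gT} * 'I_N)%type.
pose emb (q : F) := let: (C, d, m, j, A, i) := q in Point C d m j A i.
exists (pmap insub (map emb (enum F))) => -[[C d m j A i] vp] /= lvl.
rewrite mem_pmap_sub /=; apply/mapP; case/and5P: (vp) => _ /Delta_leq_card dD _ _ im.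
have mN : m < N by apply: leq_ltn_trans lvl; apply: leq_addr.
have jN : j < N by apply: leq_ltn_trans lvl; apply: leq_addl.
have iN := ltn_trans im mN.
by exists (C, Ordinal (dD : d < #|gT|.+1), Ordinal mN, Ordinal jN, A, Ordinal iN); rewrite ?mem_enum.
Qed.

Lemma iter_shift_val k x : val (iter k shift x) = iter k (@step gT) (val x).
Proof. by elim: k => //= k ->. Qed.

Lemma iter_shift_fixed x k :
  iter k shift x = x <-> pdelta (val x) * plen (val x) %| k.
Proof.
rewrite -(iter_step_fixed k (valP x)) -iter_shift_val.
by split=> [-> // | E]; apply: val_inj.
Qed.

Lemma Gorbit_gact_eq x y : Gorbit gact x = Gorbit gact y <-> shape (val x) = shape (val y).
Proof.
rewrite Gorbit_eqP; [|exact: gact1|exact: gactM].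
split=> [[g ->] | ]; first by rewrite shape_act_point.
by case/(shape_eq_act_point (valP x) (valP y)) => g Eg; exists g; apply: val_inj.
Qed.

Lemma shape_iter_shift k x :
  shape (val (iter k shift x)) =
  let: Point C d m j _ i := val x in Point C d m j set0 ((i + k) %% m).
Proof.
rewrite iter_shift_val; case: x => -[C d m j A i] /= /and5P[_ _ _ _ im].
by rewrite iter_step.
Qed.

Lemma iter_quotT_fixed x k :
  iter k (quotT shift) (Gorbit gact x) = Gorbit gact x <-> plen (val x) %| k.
Proof.
rewrite iter_quotT; [|exact: gact_shift]; rewrite Gorbit_gact_eq shape_iter_shift.
case: x => -[C d m j A i] /= /and5P[_ _ _ _ im].
by rewrite -(modn_addr_eq k im); split=> [[->] | /eqP ->].
Qed.

Section ShiftOrbits.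
Variable n : nat.
Hypothesis n_gt0 : 0 < n.

Local Notation fT := (fun C d => b C d (n %/ d)).
Local Notation in_shift_cell :=
  (@in_cell gT {set gT} (fun _ d => d %| n) fT
     (fun C d => lcosets (delta_join (rep C) d) [set: gT])).

Definition shift_rep (q : cell {set gT} fT) : point gT :=
  let: (C, d, j, B) := q in Point C d (n %/ d) j (repr B *: rep C) 0.

Lemma valid_shift_rep q : in_shift_cell q -> valid_point b (shift_rep q).
Proof.
case: q => -[[C d] j] B /and5P[CP dD dn jb BK] /=.
rewrite CP dD jb divn_gt0 ?(dvdn_leq n_gt0) ?(Delta_gt0 dD) //= andbT.
by apply/lcosetsP; exists (repr B).
Qed.

Definition shift_transversal (q : {q | in_shift_cell q}) : space :=
  insubd apex (shift_rep (val q)).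

Lemma shift_transversalE q : val (shift_transversal q) = shift_rep (val q).
Proof. exact: insubdK (valid_shift_rep (valP q)). Qed.

Lemma card_shift_cells : #|{: {q | in_shift_cell q}}| = seq_a b n.
Proof.
rewrite card_sig card_cells; apply: eq_bigr => C _; apply: eq_big_seq => d dD.
by case: ifP => // _; rewrite card_lcosets_delta_join // mulnC.
Qed.

Lemma iter_shift_transversal_fixed q k :
  iter k shift (shift_transversal q) = shift_transversal q <-> n %| k.
Proof.
rewrite iter_shift_fixed shift_transversalE.
by case: q => -[[[C d] j] B] /= /and5P[_ _ dn _ _]; rewrite mulnC divnK.
Qed.

Lemma shift_transversal_disjoint q q' t :
  iter t shift (shift_transversal q) = shift_transversal q' -> q = q'.
Proof.
move/(congr1 val) => E; apply: val_inj; move: E.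
rewrite iter_shift_val !shift_transversalE.
case: q q' => -[[[C d] j] B] /= qT [[[[C' d'] j'] B'] /= q'T].
have /and5P[_ dD dn _ BK] := qT; have /and5P[_ _ _ _ B'K] := q'T.
have m_gt0 : 0 < n %/ d by rewrite divn_gt0 ?(Delta_gt0 dD) // (dvdn_leq n_gt0 dn).
rewrite iter_step // add0n => -[EC /val_inj Ed _ /val_inj Ej EA _]; subst C' d' j'.
congr (_, _, _, _); rewrite (lcosets_reprE BK) (lcosets_reprE B'K); apply/esym/lcoset_eqP.
by apply/(mem_lcoset_joing_cycle (delta_elt_norm _ _)); exists (t %/ (n %/ d)); rewrite -EA.
Qed.

Lemma shift_transversal_cover y :
  iter n shift y = y -> (forall t, 0 < t < n -> iter t shift y <> y) ->
  exists q t, y = iter t shift (shift_transversal q).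
Proof.
move=> yn ymin; have := iter_fixed_period n_gt0 (iter_shift_fixed y) yn ymin.
case: y {yn ymin} => -[C d m j A i] /= vy dm.
have /and5P[CP dD jb AH im] := vy.
have d_lt : d < #|gT|.+1 by rewrite ltnS (Delta_leq_card dD).
have m_eq : n %/ d = m by rewrite -dm mulKn // (Delta_gt0 dD).
have j_lt : j < cell_bound fT by rewrite (leq_trans _ (leq_cell_bound fT dD)) //= m_eq.
pose K := delta_join (rep C) d.
have AK : repr A *: K \in lcosets K [set: gT] by apply/lcosetsP; exists (repr A).
have qT : in_shift_cell (C, Ordinal d_lt, Ordinal j_lt, repr A *: K).
  by rewrite /= CP dD m_eq jb -{1}dm dvdn_mulr.
have : repr A \in repr (repr A *: K) *: K by rewrite lcoset_sym (mem_repr_lcosets AK).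
case/(mem_lcoset_joing_cycle (delta_elt_norm _ _)) => s Es.
exists (Sub _ qT), (s * m + i); apply: val_inj.
have m_gt0 : 0 < m by apply: leq_ltn_trans im.
rewrite iter_shift_val shift_transversalE /= m_eq iter_step // add0n.
rewrite divnMDl // (divn_small im) addn0 modnMDl (modn_small im).
by rewrite -Es -lcosets_reprE.
Qed.

Lemma On_eq_shift : On_eq (fun _ => True) shift n (seq_a b n).
Proof.
rewrite -card_shift_cells; apply: (On_eq_transversal (phi := shift_transversal)) => //.
- exact: iter_shift_transversal_fixed.
- exact: shift_transversal_disjoint.
- by move=> y _; apply: shift_transversal_cover.
Qed.

End ShiftOrbits.

Section QuotientOrbits.
Variable n : nat.
Hypothesis n_gt0 : 0 < n.

Local Notation fQ := (fun C d => b C d n).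
Local Notation in_quot_cell :=
  (@in_cell gT unit (fun _ _ => true) fQ (fun _ _ => [set: unit])).

Definition quot_rep (q : cell unit fQ) : point gT :=
  let: (C, d, j, _) := q in Point C d n j (rep C) 0.

Lemma valid_quot_rep q : in_quot_cell q -> valid_point b (quot_rep q).
Proof.
case: q => -[[C d] j] [] /and5P[CP dD _ jb _] /=.
by rewrite CP dD jb n_gt0 andbT; apply/lcosetsP; exists 1; rewrite ?inE ?lcoset1.
Qed.

Definition quot_point (q : {q | in_quot_cell q}) : space := insubd apex (quot_rep (val q)).

Lemma quot_pointE q : val (quot_point q) = quot_rep (val q).
Proof. exact: insubdK (valid_quot_rep (valP q)). Qed.

Definition quot_transversal q : space -> Prop := Gorbit gact (quot_point q).

Lemma card_quot_cells : #|{: {q | in_quot_cell q}}| = seq_b b n.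
Proof.
rewrite card_sig card_cells; apply: eq_bigr => C _; apply: eq_bigr => d _.
by rewrite cardsT card_unit muln1.
Qed.

Lemma quot_transversal_disjoint q q' t :
  iter t (quotT shift) (quot_transversal q) = quot_transversal q' -> q = q'.
Proof.
rewrite /quot_transversal iter_quotT; last exact: gact_shift.
rewrite Gorbit_gact_eq shape_iter_shift !quot_pointE => E; apply: val_inj; move: E.
case: q q' => -[[[C d] j] []] /= _ [[[[C' d'] j'] []] /= _].
by case=> <- /val_inj <- /val_inj <-.
Qed.

Lemma quot_transversal_cover Y :
  is_Gorbit gact Y -> iter n (quotT shift) Y = Y ->
  (forall t, 0 < t < n -> iter t (quotT shift) Y <> Y) ->
  exists q t, Y = iter t (quotT shift) (quot_transversal q).
Proof.
move=> [x ->] xn xmin; have := iter_fixed_period n_gt0 (iter_quotT_fixed x) xn xmin.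
case: x {xn xmin} => -[C d m j A i] /= vx mn; subst m.
have /and5P[CP dD jb _ im] := vx.
have d_lt : d < #|gT|.+1 by rewrite ltnS (Delta_leq_card dD).
have j_lt : j < cell_bound fQ by rewrite (leq_trans _ (leq_cell_bound fQ dD)).
have qT : in_quot_cell (C, Ordinal d_lt, Ordinal j_lt, tt) by rewrite /= CP dD jb in_setT.
exists (Sub _ qT), i; rewrite /quot_transversal iter_quotT; last exact: gact_shift.
by apply/Gorbit_gact_eq; rewrite shape_iter_shift quot_pointE /= add0n (modn_small im).
Qed.

Lemma On_eq_quot : On_eq (is_Gorbit gact) (quotT shift) n (seq_b b n).
Proof.
rewrite -card_quot_cells; apply: (On_eq_transversal (phi := quot_transversal)) => //.
- by move=> q; exists (quot_point q).
- move=> q k; apply: iff_trans (iter_quotT_fixed _ _) _.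
  by rewrite quot_pointE; case: q => -[[[C d] j] []].
- exact: quot_transversal_disjoint.
- exact: quot_transversal_cover.
Qed.

End QuotientOrbits.

End Space.

Theorem proposition10 (gT : finGroupType)
    (b : {set {set gT}} -> nat -> nat -> nat)
    (hb : (1 <= b ([set: gT] :^: [set: gT])%g 1%N 1%N)%N) :
  exists (X : Type) (d : X -> X -> R) (T : X -> X) (act : gT -> X -> X),
    is_metric d /\ m_compact d /\ m_homeomorphism d T /\
    commuting_action d act T /\
    forall n : nat, (1 <= n)%N ->
      On_eq (fun _ : X => True) T n (seq_a b n) /\
      On_eq (is_Gorbit act) (quotT T) n (seq_b b n).
Proof.
pose dist := level_dist (apex hb) (@space_level gT b).
exists (space b), dist, (@shift gT b), (@gact gT b).
split; first exact: level_dist_metric.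
split; first exact/level_dist_compact/space_level_finite.
split.
  apply: level_dist_homeomorphism (@shiftK _ _) (@shift_invK _ _) (shift_apex hb) _.
  exact: space_level_shift.
split; last by move=> n n_gt0; split; [exact: On_eq_shift | exact: On_eq_quot].
split; first exact: gact1.
split; first exact: gactM.
split; last exact: gact_shift.
move=> g; apply: level_dist_continuous; first exact: can_inj (gactK g).
  exact: gact_apex.
exact: space_level_gact.
Qed.
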